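(* In the GCSA-NA construction (context), for $l\in[\ell],k\in[K_c]$ let $\mathbf{C}^{l,k}_1,\dots,\mathbf{C}^{l,k}_{R'+p-1}\in\mathbb{F}^{\frac{\lambda}{m}\times\frac{\mu}{n}}$ be defined by $\mathbf{C}^{l,k}_{i+1}=\sum \mathbf{A}^{l,k}_{m',p'}\mathbf{B}^{l,k}_{p'',n''}$, the sum over all $(m',p',p'',n'')\in[m]\times[p]\times[p]\times[n]$ with $p'-1+p(m'-1)+p-p''+pm(n''-1)=i$, so that $P_s^{l,k}Q_s^{l,k}=\sum_{i=0}^{R'+p-2}\mathbf{C}^{l,k}_{i+1}(f_{l,k}-\alpha_s)^i$. Then: (a) For all $m'\in[m],n''\in[n]$, $\mathbf{C}^{l,k}_{p+p(m'-1)+pm(n''-1)}=\sum_{p'\in[p]}\mathbf{A}^{l,k}_{m',p'}\mathbf{B}^{l,k}_{p',n''}$, the $(m',n'')$ block of $\mathbf{A}^{l,k}\mathbf{B}^{l,k}$. (b) There exist matrices $I_1,\dots,I_{R'K_c+2X-1}\in\mathbb{F}^{\frac{\lambda}{m}\times\frac{\mu}{n}}$, not depending on $s$, each a function of $(\mathbf{A},\mathbf{B},\mathbf{Z}^A_{\cdot,\cdot},\mathbf{Z}^B_{\cdot,\cdot})$, with $I_x$ a function of $(\mathbf{Z}^A_{\cdot,\cdot},\mathbf{Z}^B_{\cdot,\cdot})$ alone whenever $x>R'(K_c-1)+X+D_E$, such that for every $s\in[S]$, $$Y_s=\sum_{l\in[\ell]}\sum_{k\in[K_c]}\sum_{i=0}^{R'-1}\frac{\sum_{i'=0}^{i}c_{l,k,i-i'}\mathbf{D}^{l,k}_{i'+1}}{(f_{l,k}-\alpha_s)^{R'-i}}+\sum_{x\in[R'K_c+2X-1]}\alpha_s^{x-1}J_x,$$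 where $\mathbf{D}^{l,k}_i=\mathbf{C}^{l,k}_i+\mathbf{Z}''_{l,k,i}$ for $i\in[R']$, $J_x=I_x+\mathbf{Z}'_x$ for $x\in[R'(K_c-1)+X+D_E]$, and $J_x=I_x$ for $R'(K_c-1)+X+D_E<x\le R'K_c+2X-1$.
   Context: GCSA-NA construction. Let $\mathbb{F}$ be a finite field and $S,X,\ell,K_c,p,m,n,\lambda,\kappa,\mu$ positive integers with $m\mid\lambda$, $p\mid\kappa$, $n\mid\mu$, $L=\ell K_c\le|\mathbb{F}|-S$. Inputs $\mathbf{A}^{l,k}\in\mathbb{F}^{\lambda\times\kappa}$, $\mathbf{B}^{l,k}\in\mathbb{F}^{\kappa\times\mu}$ ($l\in[\ell],k\in[K_c]$). Partition $\mathbf{A}^{l,k}$ into an $m\times p$ grid of blocks $\mathbf{A}^{l,k}_{i,j}\in\mathbb{F}^{\frac{\lambda}{m}\times\frac{\kappa}{p}}$ and $\mathbf{B}^{l,k}$ into a $p\times n$ grid of blocks $\mathbf{B}^{l,k}_{i,j}\in\mathbb{F}^{\frac{\kappa}{p}\times\frac{\mu}{n}}$. Fix $S+L$ distinct elements $f_{1,1},\dots,f_{\ell,K_c},\alpha_1,\dots,\alpha_S\in\mathbb{F}$. Let $R'=pmn$, $D_E=\max(pm,\,pmn-pm+p)-1$, $\mathcal{E}=\{p+p(m'-1)+pm(n''-1): m'\in[m],n''\in[n]\}$, and $\Delta_s^{l}=\prod_{k\in[K_c]}(f_{l,k}-\alpha_s)^{R'}$. Let $c_{l,k,i}$ be the coefficients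 of $\Psi_{l,k}(\alpha)=\prod_{k'\in[K_c]\setminus\{k\}}(\alpha+f_{l,k'}-f_{l,k})^{R'}=\sum_{i=0}^{R'(K_c-1)}c_{l,k,i}\alpha^i$, with $c_{l,k,i}=0$ for $i>R'(K_c-1)$. $P_s^{l,k}=\sum_{m'\in[m]}\sum_{p'\in[p]}\mathbf{A}^{l,k}_{m',p'}(f_{l,k}-\alpha_s)^{p'-1+p(m'-1)}$, $Q_s^{l,k}=\sum_{p''\in[p]}\sum_{n''\in[n]}\mathbf{B}^{l,k}_{p'',n''}(f_{l,k}-\alpha_s)^{p-p''+pm(n''-1)}$. Noise matrices $\mathbf{Z}^A_{l,x}\in\mathbb{F}^{\frac{\lambda}{m}\times\frac{\kappa}{p}}$, $\mathbf{Z}^B_{l,x}\in\mathbb{F}^{\frac{\kappa}{p}\times\frac{\mu}{n}}$ ($l\in[\ell],x\in[X]$); $\mathbf{Z}'_i\in\mathbb{F}^{\frac{\lambda}{m}\times\frac{\mu}{n}}$ ($i\in[R'(K_c-1)+X+D_E]$); $\mathbf{Z}''_{l,k,i}\in\mathbb{F}^{\frac{\lambda}{m}\times\frac{\mu}{n}}$ ($i\in[R']$) with $\mathbf{Z}''_{l,k,i}=\mathbf{0}$ for $i\in\mathcal{E}$ (arbitrary otherwise). $\widetilde{A}^s_l=\Delta_s^{l}\big(\sum_{k\in[K_c]}\frac{P_s^{l,k}}{(f_{l,k}-\alpha_s)^{R'}}+\sum_{x\in[X]}\alpha_s^{x-1}\mathbf{Z}^A_{l,x}\big)$, $\widetilde{B}^s_l=\sum_{k\in[K_c]}\frac{Q_s^{l,k}}{(f_{l,k}-\alpha_s)^{R'}}+\sum_{x\in[X]}\alpha_s^{x-1}\mathbf{Z}^B_{l,x}$,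 $\widetilde{M}_s=\sum_{x\in[R'(K_c-1)+X+D_E]}\alpha_s^{x-1}\mathbf{Z}'_x+\sum_{l\in[\ell]}\sum_{k\in[K_c]}\sum_{i=0}^{R'-1}\frac{\sum_{i'=0}^{i}c_{l,k,i-i'}\mathbf{Z}''_{l,k,i'+1}}{(f_{l,k}-\alpha_s)^{R'-i}}$, and $Y_s=\sum_{l\in[\ell]}\widetilde{A}^s_l\widetilde{B}^s_l+\widetilde{M}_s$. *)

From HB Require Import structures.
From mathcomp Require Import all_boot all_order all_algebra.
Set Implicit Arguments. Unset Strict Implicit. Unset Printing Implicit Defensive.
Import GRing.Theory.
Local Open Scope ring_scope.

(* Row-major block indexing: block i (0-indexed), offset r inside a block of size a. *)
Lemma bidx_subproof (M a : nat) (i : 'I_M) (r : 'I_a) : (i * a + r < M * a)%N.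
Proof.
apply: (@leq_trans (i.+1 * a)%N); first by rewrite mulSn addnC ltn_add2r ltn_ord.
by rewrite leq_mul2r ltn_ord orbT.
Qed.

Definition bidx (M a : nat) (i : 'I_M) (r : 'I_a) : 'I_(M * a) :=
  Ordinal (bidx_subproof i r).

Definition blk (T : Type) (M a N b : nat) (A : 'M[T]_(M * a, N * b))
  (i : 'I_M) (j : 'I_N) : 'M[T]_(a, b) :=
  \matrix_(r < a, s < b) A (bidx i r) (bidx j s).

Section GCSA.
Variables (F : fieldType) (ell Kc X p m n a b c : nat).

Definition Rp : nat := (p * m * n)%N.
Definition DE : nat := (maxn (p * m) (p * m * n - p * m + p) - 1)%N.
Definition N0 : nat := (Rp * (Kc - 1) + X + DE)%N.

(* membership in the set E = {p + p(m'-1) + pm(n''-1)}; mi = m'-1, ni = n''-1 *)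
Definition inEset (i : nat) : bool :=
  [exists mi : 'I_m, exists ni : 'I_n, i == (p + p * mi + p * m * ni)%N].

(* P_s^{l,k} and Q_s^{l,k}, with t = f_{l,k} - alpha_s; indices 0-based:
   pi = p'-1, mi = m'-1, pj = p''-1, ni = n''-1 *)
Definition Ppoly (A : 'M[F]_(m * a, p * b)) (t : F) : 'M[F]_(a, b) :=
  \sum_(mi < m) \sum_(pi < p) (t ^+ (pi + p * mi)) *: blk A mi pi.
Definition Qpoly (B : 'M[F]_(p * b, n * c)) (t : F) : 'M[F]_(b, c) :=
  \sum_(pj < p) \sum_(ni < n) (t ^+ (p - pj.+1 + p * m * ni)) *: blk B pj ni.

(* coefficient of degree e in P*Q *)
Definition Cexp (A : 'M[F]_(m * a, p * b)) (B : 'M[F]_(p * b, n * c)) (e : nat)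
  : 'M[F]_(a, c) :=
  \sum_(mi < m) \sum_(pi < p) \sum_(pj < p) \sum_(ni < n)
    (if (pi + p * mi + (p - pj.+1) + p * m * ni)%N == e
     then blk A mi pi *m blk B pj ni else 0).
(* 1-indexed: C_{i+1} = Cexp i  (only used for i >= 1) *)
Definition Cmat (A : 'M[F]_(m * a, p * b)) (B : 'M[F]_(p * b, n * c)) (i : nat)
  : 'M[F]_(a, c) := Cexp A B i.-1.

Definition Psi (f : 'I_ell -> 'I_Kc -> F) (l : 'I_ell) (k : 'I_Kc) : {poly F} :=
  \prod_(k' < Kc | k' != k) ('X + (f l k' - f l k)%:P) ^+ Rp.
Definition cc (f : 'I_ell -> 'I_Kc -> F) l k (i : nat) : F := (Psi f l k)`_i.

Variables (S : nat) (f : 'I_ell -> 'I_Kc -> F) (alpha : 'I_S -> F).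

Definition Delta (s : 'I_S) (l : 'I_ell) : F := \prod_(k < Kc) (f l k - alpha s) ^+ Rp.

Definition Atil (A : 'I_ell -> 'I_Kc -> 'M[F]_(m * a, p * b))
  (ZA : 'I_ell -> 'I_X -> 'M[F]_(a, b)) (s : 'I_S) (l : 'I_ell) : 'M[F]_(a, b) :=
  Delta s l *: (\sum_(k < Kc) ((f l k - alpha s) ^+ Rp)^-1 *: Ppoly (A l k) (f l k - alpha s)
               + \sum_(x < X) alpha s ^+ x *: ZA l x).

Definition Btil (B : 'I_ell -> 'I_Kc -> 'M[F]_(p * b, n * c))
  (ZB : 'I_ell -> 'I_X -> 'M[F]_(b, c)) (s : 'I_S) (l : 'I_ell) : 'M[F]_(b, c) :=
  \sum_(k < Kc) ((f l k - alpha s) ^+ Rp)^-1 *: Qpoly (B l k) (f l k - alpha s)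
  + \sum_(x < X) alpha s ^+ x *: ZB l x.

Definition fracSum (W : 'I_ell -> 'I_Kc -> nat -> 'M[F]_(a, c)) (s : 'I_S) : 'M[F]_(a, c) :=
  \sum_(l < ell) \sum_(k < Kc) \sum_(i < Rp)
    ((f l k - alpha s) ^+ (Rp - i))^-1 *:
      \sum_(i' < i.+1) cc f l k (i - i') *: W l k i'.+1.

(* Z' and Z'' are 1-indexed *)
Definition Mtil (Z' : nat -> 'M[F]_(a, c)) (Z'' : 'I_ell -> 'I_Kc -> nat -> 'M[F]_(a, c))
  (s : 'I_S) : 'M[F]_(a, c) :=
  \sum_(x < N0) alpha s ^+ x *: Z' x.+1 + fracSum Z'' s.

Definition Yans (A : 'I_ell -> 'I_Kc -> 'M[F]_(m * a, p * b))
  (B : 'I_ell -> 'I_Kc -> 'M[F]_(p * b, n * c))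
  (ZA : 'I_ell -> 'I_X -> 'M[F]_(a, b)) (ZB : 'I_ell -> 'I_X -> 'M[F]_(b, c))
  (Z' : nat -> 'M[F]_(a, c)) (Z'' : 'I_ell -> 'I_Kc -> nat -> 'M[F]_(a, c))
  (s : 'I_S) : 'M[F]_(a, c) :=
  \sum_(l < ell) Atil A ZA s l *m Btil B ZB s l + Mtil Z' Z'' s.

End GCSA.

(* Write t_k = f_{l,k} - alpha_s and Delta = prod_k t_k^R'.  Multiplying out Atil_l Btil_l, every
   product except the diagonal ones P_k Q_k / t_k^(2R') is Delta divided by at most one power
   t_k^R' of each factor, hence the value at alpha_s of a polynomial with matrix coefficients.
   A diagonal product equals Psi_{l,k}(t_k) sum_i t_k^i C_{i+1} / t_k^R'; splitting this Laurent
   polynomial in t_k at degree 0 yields the fractional terms, with numerators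
   sum_i' c_{l,k,i-i'} C_{i'+1}, plus a polynomial in t_k, i.e. in alpha_s.  We carry these
   polynomial parts as matrices over F[X] and take I_x to be their coefficients; counting degrees
   shows that only the product of the two noise polynomials reaches degree N0 = R'(K_c-1)+X+D_E.
   Part (a) rests on uniqueness of mixed-radix digits: the exponent of t in
   A_{m'',p'} B_{p'',n'''} equals p-1+p(m'-1)+pm(n''-1) only when p' = p'', m'' = m', n''' = n''. *)

From HB Require Import structures.
From mathcomp Require Import all_boot all_order all_algebra.
From mathcomp Require Import zify ring.
Set Implicit Arguments. Unset Strict Implicit. Unset Printing Implicit Defensive.
Import GRing.Theory.
Local Open Scope ring_scope.

Notation mxeval z := (map_mx (horner_eval z)).
Notation mxcoef x := (map_mx (coefp x)).

Section PolyMatrix.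
Variable F : fieldType.

Definition mxdeg_leq (d : nat) r s (M : 'M[{poly F}]_(r, s)) : Prop :=
  forall i j, (size (M i j) <= d.+1)%N.

Lemma mxeval_const r s z (M : 'M[F]_(r, s)) : mxeval z (map_mx polyC M) = M.
Proof. by apply/matrixP => i j; rewrite !mxE /horner_eval hornerC. Qed.

Lemma mxeval_sum r s z I (rI : seq I) (P : pred I) (G : I -> 'M[{poly F}]_(r, s)) :
  mxeval z (\sum_(i <- rI | P i) G i) = \sum_(i <- rI | P i) mxeval z (G i).
Proof. exact: raddf_sum. Qed.

Lemma mxevalD r s z (M N : 'M[{poly F}]_(r, s)) : mxeval z (M + N) = mxeval z M + mxeval z N.
Proof. exact: raddfD. Qed.

Lemma mxevalZ r s z q (M : 'M[{poly F}]_(r, s)) : mxeval z (q *: M) = q.[z] *: mxeval z M.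
Proof. exact: map_mxZ. Qed.

Lemma mxevalM r s t z (M : 'M[{poly F}]_(r, s)) (N : 'M[{poly F}]_(s, t)) :
  mxeval z (M *m N) = mxeval z M *m mxeval z N.
Proof. exact: map_mxM. Qed.

Lemma mxeval_coef d r s z (M : 'M[{poly F}]_(r, s)) :
  mxdeg_leq d M -> mxeval z M = \sum_(x < d.+1) z ^+ x *: mxcoef x M.
Proof.
move=> dM; apply/matrixP => i j; rewrite !mxE summxE /horner_eval.
by rewrite (horner_coef_wide z (dM i j)); apply: eq_bigr => x _; rewrite !mxE mulrC.
Qed.

Lemma mxcoef_eq0 d x r s (M : 'M[{poly F}]_(r, s)) :
  mxdeg_leq d M -> (d < x)%N -> mxcoef x M = 0.
Proof.
by move=> dM dx; apply/matrixP => i j; rewrite !mxE /= nth_default // (leq_trans (dM i j)).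
Qed.

Lemma mxdeg_leqW d d' r s (M : 'M[{poly F}]_(r, s)) :
  (d <= d')%N -> mxdeg_leq d M -> mxdeg_leq d' M.
Proof. by move=> dd' dM i j; rewrite (leq_trans (dM i j)). Qed.

Lemma mxdeg_leq_const r s (M : 'M[F]_(r, s)) : mxdeg_leq 0 (map_mx polyC M).
Proof. by move=> i j; rewrite mxE size_polyC leq_b1. Qed.

Lemma mxdeg_leqD d r s (M N : 'M[{poly F}]_(r, s)) :
  mxdeg_leq d M -> mxdeg_leq d N -> mxdeg_leq d (M + N).
Proof. by move=> dM dN i j; rewrite mxE (leq_trans (size_polyD _ _)) // geq_max dM dN. Qed.

Lemma mxdeg_leq_sum d r s I (rI : seq I) (P : pred I) (G : I -> 'M[{poly F}]_(r, s)) :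
  (forall i, P i -> mxdeg_leq d (G i)) -> mxdeg_leq d (\sum_(i <- rI | P i) G i).
Proof.
move=> dG; elim/big_rec: _ => [i j|i M Pi dM]; first by rewrite mxE size_poly0.
exact: mxdeg_leqD (dG i Pi) dM.
Qed.

Lemma mxdeg_leqZ dq d r s (q : {poly F}) (M : 'M[{poly F}]_(r, s)) :
  (size q <= dq.+1)%N -> mxdeg_leq d M -> mxdeg_leq (dq + d) (q *: M).
Proof.
move=> sq dM i j; rewrite mxE (leq_trans (size_polyMleq _ _)) //.
by move: (size q) (size (M i j)) sq (dM i j) => x y; lia.
Qed.

Lemma mxdeg_leq_scaleC d r s (q : {poly F}) (M : 'M[F]_(r, s)) :
  (size q <= d.+1)%N -> mxdeg_leq d (q *: map_mx polyC M).
Proof. by move=> sq; rewrite -[d]addn0; apply: mxdeg_leqZ sq (mxdeg_leq_const M). Qed.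

Lemma mxdeg_leqM d1 d2 r s t (M : 'M[{poly F}]_(r, s)) (N : 'M[{poly F}]_(s, t)) :
  mxdeg_leq d1 M -> mxdeg_leq d2 N -> mxdeg_leq (d1 + d2) (M *m N).
Proof.
move=> dM dN i j; rewrite mxE (leq_trans (size_sum _ _ _)) //.
apply/bigmax_leqP => k _; rewrite (leq_trans (size_polyMleq _ _)) //.
by move: (size (M i k)) (size (N k j)) (dM i k) (dN k j) => x y; lia.
Qed.

Definition subCX (u : F) : {poly F} := u%:P - 'X.

Lemma horner_subCX u z : (subCX u).[z] = u - z.
Proof. by rewrite hornerD hornerN hornerC hornerX. Qed.

Lemma size_subCX u : size (subCX u) = 2.
Proof. by rewrite /subCX -opprB size_polyN size_XsubC. Qed.

Lemma size_subCX_exp u e : size (subCX u ^+ e) = e.+1.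
Proof.
have nz : subCX u ^+ e != 0 by rewrite expf_neq0 // -size_poly_eq0 size_subCX.
by rewrite polySpred // size_exp size_subCX mul1n.
Qed.

Lemma horner_div_exp (q : {poly F}) t N : t != 0 ->
  q.[t] / t ^+ N = \sum_(j < N) q`_j / t ^+ (N - j) + (drop_poly N q).[t].
Proof.
move=> t0; rewrite -{1}(poly_take_drop N q) hornerD hornerM hornerXn mulrDl.
rewrite mulfK ?expf_neq0 //; congr (_ + _).
rewrite (horner_coef_wide t (size_take_poly N q)) mulr_suml; apply: eq_bigr => j _.
rewrite coef_take_poly ltn_ord.
have -> : t ^+ N = t ^+ j * t ^+ (N - j) by rewrite -exprD subnKC // ltnW.
by field; rewrite !expf_neq0.
Qed.

End PolyMatrix.

Lemma card_predD1 (T : finType) (P : pred T) x : x \in P -> #|[predD1 P & x]| = #|P|.-1.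
Proof. by move=> Px; rewrite (cardD1 x) Px. Qed.

Lemma big_bidx (V : nmodType) (M a : nat) (G : 'I_(M * a) -> V) : (0 < a)%N ->
  \sum_(j < M * a) G j = \sum_(i < M) \sum_(r < a) G (bidx i r).
Proof.
move=> a0; rewrite pair_big /=.
have lt_div (j : 'I_(M * a)) : (j %/ a < M)%N by rewrite ltn_divLR // ltn_ord.
have lt_mod (j : 'I_(M * a)) : (j %% a < a)%N by rewrite ltn_mod.
rewrite (reindex (fun x : 'I_M * 'I_a => bidx x.1 x.2)) //.
exists (fun j => (Ordinal (lt_div j), Ordinal (lt_mod j))) => [[i r] _ | j _].
  by congr pair; apply: val_inj; rewrite /= (divnMDl, modnMDl) ?(divn_small, modn_small) ?addn0.
by apply: val_inj; rewrite /= -divn_eq.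
Qed.

Lemma blk_mul (R : pzSemiRingType) (m p n a b c : nat) (A : 'M[R]_(m * a, p * b))
  (B : 'M[R]_(p * b, n * c)) (i : 'I_m) (j : 'I_n) : (0 < b)%N ->
  blk (A *m B) i j = \sum_(k < p) blk A i k *m blk B k j.
Proof.
move=> b0; apply/matrixP => r s; rewrite !mxE summxE (big_bidx _ b0).
by apply: eq_bigr => k _; rewrite !mxE; apply: eq_bigr => t _; rewrite !mxE.
Qed.

Lemma mixed_radix_inj d q1 r1 q2 r2 : (r1 < d)%N -> (r2 < d)%N ->
  (q1 * d + r1 = q2 * d + r2)%N -> q1 = q2 /\ r1 = r2.
Proof.
move=> r1d r2d e; have d0 : (0 < d)%N by apply: leq_ltn_trans r1d.
split; first by have := congr1 (divn^~ d) e; rewrite /= !divnMDl // !divn_small ?addn0.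
by have := congr1 (modn^~ d) e; rewrite /= !modnMDl !modn_small.
Qed.

Section BlockProduct.
Variables (F : fieldType) (p m n a b c : nat).
Local Notation R := (Rp p m n).

Lemma Pexp_leq (mi pi : nat) : (mi < m)%N -> (pi < p)%N -> (pi + p * mi <= (p * m).-1)%N.
Proof.
move=> mim pip; have : (p * mi.+1 <= p * m)%N by rewrite leq_mul2l mim orbT.
by rewrite mulnS; lia.
Qed.

Lemma Qexp_leq (pj ni : nat) : (pj < p)%N -> (ni < n)%N ->
  (p - pj.+1 + p * m * ni <= (R - p * m + p).-1)%N.
Proof.
move=> pjp nin; have : (p * m * ni.+1 <= p * m * n)%N by rewrite leq_mul2l nin orbT.
by rewrite /Rp mulnS; lia.
Qed.

Lemma pm_le_R : (0 < n)%N -> (p * m <= R)%N.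
Proof. exact: leq_pmulr. Qed.

Lemma N0_le_nterms Kc X : (0 < X)%N -> (0 < Kc)%N -> (0 < m)%N -> (0 < n)%N ->
  (N0 Kc X p m n <= R * Kc + 2 * X - 1)%N.
Proof.
move=> X0 Kc0 m0 n0; have pmR := pm_le_R n0; have ppm : (p <= p * m)%N by rewrite leq_pmulr.
have RKc : (R <= R * Kc)%N by rewrite leq_pmulr.
move: ppm pmR RKc; rewrite /N0 /DE mulnBr muln1 /Rp.
by move: (p * m * n * Kc)%N (p * m * n)%N => RK R0; lia.
Qed.

Lemma DE_ge : ((p * m).-1 <= DE p m n)%N /\ ((R - p * m + p).-1 <= DE p m n)%N.
Proof. by rewrite /DE /Rp; split; lia. Qed.

Lemma block_exp_lt (mi pi pj ni : nat) : (mi < m)%N -> (pi < p)%N -> (pj < p)%N -> (ni < n)%N ->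
  (pi + p * mi + (p - pj.+1) + p * m * ni < R + p - 1)%N.
Proof.
move=> mim pip pjp nin; have := Pexp_leq mim pip; have := Qexp_leq pjp nin.
have : (p * m <= R)%N by rewrite leq_pmulr //; apply: leq_ltn_trans nin.
have : (0 < p * m)%N by rewrite muln_gt0 (leq_ltn_trans _ pip) // (leq_ltn_trans _ mim).
lia.
Qed.

Lemma block_exp_eqE (mi mi' pi pj ni ni' : nat) : (0 < p)%N -> (mi < m)%N -> (mi' < m)%N ->
  (pi < p)%N -> (pj < p)%N ->
  (pi + p * mi' + (p - pj.+1) + p * m * ni' == (p + p * mi + p * m * ni).-1)%N =
  [&& mi' == mi, pi == pj & ni' == ni].
Proof.
move=> p0 mim mim' pip pjp; apply/eqP/and3P => [e | [/eqP-> /eqP-> /eqP->]]; last by lia.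
have e' : ((ni' * m + mi') * p + pi = (ni * m + mi) * p + pj)%N.
  have -> : ((ni' * m + mi') * p = p * mi' + p * m * ni')%N by ring.
  have -> : ((ni * m + mi) * p = p * mi + p * m * ni)%N by ring.
  lia.
have [e1 ->] := mixed_radix_inj pip pjp e'.
by have [-> ->] := mixed_radix_inj mim' mim e1.
Qed.

Lemma sum_exp_if_eq (V : lmodType F) (t : F) N e (M : V) : (e < N)%N ->
  \sum_(i < N) t ^+ i *: (if e == i then M else 0) = t ^+ e *: M.
Proof.
move=> eN; rewrite (bigD1 (Ordinal eN)) //= eqxx big1 ?addr0 // => i ne.
case: eqP => [e_i | _]; last by rewrite scaler0.
by rewrite -(inj_eq val_inj) /= -e_i eqxx in ne.
Qed.

Lemma Ppoly_mulmx_Qpoly (A : 'M[F]_(m * a, p * b)) (B : 'M[F]_(p * b, n * c)) t :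
  Ppoly A t *m Qpoly m B t = \sum_(i < R + p - 1) t ^+ i *: Cmat A B i.+1.
Proof.
have -> : Ppoly A t *m Qpoly m B t = \sum_(mi < m) \sum_(pi < p) \sum_(pj < p) \sum_(ni < n)
    t ^+ (pi + p * mi + (p - pj.+1) + p * m * ni) *: (blk A mi pi *m blk B pj ni).
  rewrite mulmx_suml; apply: eq_bigr => mi _; rewrite mulmx_suml; apply: eq_bigr => pi _.
  rewrite -scalemxAl mulmx_sumr scaler_sumr; apply: eq_bigr => pj _.
  rewrite mulmx_sumr scaler_sumr; apply: eq_bigr => ni _.
  by rewrite -scalemxAr scalerA -exprD !addnA.
rewrite /Cmat /Cexp; symmetry.
do 4!(under eq_bigr => i _ do rewrite scaler_sumr; rewrite exchange_big; apply: eq_bigr => ? _ /=).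
by rewrite sum_exp_if_eq // block_exp_lt.
Qed.

Lemma Cmat_block (A : 'M[F]_(m * a, p * b)) (B : 'M[F]_(p * b, n * c)) (mi : 'I_m) (ni : 'I_n) :
  (0 < p)%N -> Cmat A B (p + p * mi + p * m * ni) = \sum_(pi < p) blk A mi pi *m blk B pi ni.
Proof.
move=> p0; rewrite /Cmat /Cexp (bigD1 mi) //= [X in _ + X]big1 ?addr0 => [|mi' ne].
  apply: eq_bigr => pi _; rewrite (bigD1 pi) //= [X in _ + X]big1 ?addr0 => [|pj ne].
    rewrite (bigD1 ni) //= block_exp_eqE ?ltn_ord // !eqxx /= big1 ?addr0 // => ni' ne.
    by rewrite block_exp_eqE ?ltn_ord // !val_eqE (negPf ne) !andbF.
  apply: big1 => ni' _; rewrite block_exp_eqE ?ltn_ord // !val_eqE eq_sym (negPf ne).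
  by rewrite andbF.
apply: big1 => pi _; apply: big1 => pj _; apply: big1 => ni' _.
by rewrite block_exp_eqE ?ltn_ord // !val_eqE (negPf ne).
Qed.

End BlockProduct.

Section BlockPolynomials.
Variables (F : fieldType) (X p m n a b c : nat).
Local Notation R := (Rp p m n).

Lemma mxeval_scaleC r s z (q : {poly F}) (M : 'M[F]_(r, s)) :
  mxeval z (q *: map_mx polyC M) = q.[z] *: M.
Proof. by rewrite mxevalZ mxeval_const. Qed.

Definition Ppol (A : 'M[F]_(m * a, p * b)) (u : F) : 'M[{poly F}]_(a, b) :=
  \sum_(mi < m) \sum_(pi < p) subCX u ^+ (pi + p * mi) *: map_mx polyC (blk A mi pi).
Definition Qpol (B : 'M[F]_(p * b, n * c)) (u : F) : 'M[{poly F}]_(b, c) :=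
  \sum_(pj < p) \sum_(ni < n) subCX u ^+ (p - pj.+1 + p * m * ni) *: map_mx polyC (blk B pj ni).
Definition Zpol r s (Z : 'I_X -> 'M[F]_(r, s)) : 'M[{poly F}]_(r, s) :=
  \sum_(x < X) 'X^x *: map_mx polyC (Z x).

Lemma mxeval_Ppol A u z : mxeval z (Ppol A u) = Ppoly A (u - z).
Proof.
rewrite mxeval_sum; apply: eq_bigr => mi _; rewrite mxeval_sum; apply: eq_bigr => pi _.
by rewrite mxeval_scaleC horner_exp horner_subCX.
Qed.

Lemma mxeval_Qpol B u z : mxeval z (Qpol B u) = Qpoly m B (u - z).
Proof.
rewrite mxeval_sum; apply: eq_bigr => pj _; rewrite mxeval_sum; apply: eq_bigr => ni _.
by rewrite mxeval_scaleC horner_exp horner_subCX.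
Qed.

Lemma mxeval_Zpol r s (Z : 'I_X -> 'M[F]_(r, s)) z :
  mxeval z (Zpol Z) = \sum_(x < X) z ^+ x *: Z x.
Proof. by rewrite mxeval_sum; apply: eq_bigr => x _; rewrite mxeval_scaleC hornerXn. Qed.

Lemma mxdeg_Ppol A u : mxdeg_leq (p * m).-1 (Ppol A u).
Proof.
apply: mxdeg_leq_sum => mi _; apply: mxdeg_leq_sum => pi _.
by apply: mxdeg_leq_scaleC; rewrite size_subCX_exp ltnS Pexp_leq.
Qed.

Lemma mxdeg_Qpol B u : mxdeg_leq (R - p * m + p).-1 (Qpol B u).
Proof.
apply: mxdeg_leq_sum => pj _; apply: mxdeg_leq_sum => ni _.
by apply: mxdeg_leq_scaleC; rewrite size_subCX_exp ltnS Qexp_leq.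
Qed.

Lemma mxdeg_Zpol r s (Z : 'I_X -> 'M[F]_(r, s)) : mxdeg_leq X.-1 (Zpol Z).
Proof.
apply: mxdeg_leq_sum => x _; apply: mxdeg_leq_scaleC.
by rewrite size_polyXn ltnS -ltnS prednK ?ltn_ord // (leq_ltn_trans _ (ltn_ord x)).
Qed.

End BlockPolynomials.

Lemma sum_scale_ifD (R : pzRingType) (V : lmodType R) (z : R) N M (G H : nat -> V) :
  (M <= N)%N -> \sum_(x < N) z ^+ x *: (if (x.+1 <= M)%N then G x + H x else G x)
  = \sum_(x < N) z ^+ x *: G x + \sum_(x < M) z ^+ x *: H x.
Proof.
move=> MN; rewrite (big_ord_widen N (fun x => z ^+ x *: H x) MN) [X in _ + X]big_mkcond.
by rewrite -big_split; apply: eq_bigr => x _ /=; case: ifP; rewrite ?scalerDr ?addr0.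
Qed.

Section Encoding.
Variables (F : fieldType) (ell Kc X p m n a b c S : nat).
Variables (f : 'I_ell -> 'I_Kc -> F) (alpha : 'I_S -> F).
Hypothesis hfa : forall l k s, f l k != alpha s.
Hypotheses (hX : (0 < X)%N) (hKc : (0 < Kc)%N) (hp : (0 < p)%N) (hm : (0 < m)%N) (hn : (0 < n)%N).
Local Notation R := (Rp p m n).

Definition deltaP l (P : pred 'I_Kc) : {poly F} := \prod_(k | P k) subCX (f l k) ^+ R.

Lemma horner_deltaP l P z : (deltaP l P).[z] = \prod_(k | P k) (f l k - z) ^+ R.
Proof. by rewrite horner_prod; apply: eq_bigr => k _; rewrite horner_exp horner_subCX. Qed.

Lemma size_deltaP l P : size (deltaP l P) = (#|P| * R).+1.
Proof.
rewrite size_prod => [|k _]; last by rewrite -size_poly_eq0 size_subCX_exp.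
under eq_bigr => k _ do rewrite size_subCX_exp.
by rewrite sum_nat_const mulnS; move: #|P| R => x y; lia.
Qed.

Lemma deltaP_D1 l (P : pred 'I_Kc) k : k \in P ->
  deltaP l P = subCX (f l k) ^+ R * deltaP l [predD1 P & k].
Proof. by move=> Pk; rewrite /deltaP (bigD1 k) //; congr (_ * _); apply: eq_bigl => i; rewrite !inE andbC. Qed.

Lemma deltaP_T_D1 l k : deltaP l predT = subCX (f l k) ^+ R * deltaP l (predC1 k).
Proof. by rewrite (@deltaP_D1 l predT k) //; congr (_ * _); apply: eq_bigl => i; rewrite !inE andbT. Qed.

Lemma Delta_deltaP s l : Delta p m n f alpha s l = (deltaP l predT).[alpha s].
Proof. by rewrite horner_deltaP. Qed.

Lemma Delta_div s l k :
  Delta p m n f alpha s l * ((f l k - alpha s) ^+ R)^-1 = (deltaP l (predC1 k)).[alpha s].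
Proof.
rewrite Delta_deltaP (deltaP_T_D1 l k) hornerM horner_exp horner_subCX mulrC mulKf //.
by rewrite expf_neq0 // subr_eq0.
Qed.

Lemma horner_Psi l k z : (Psi p m n f l k).[f l k - z] = (deltaP l (predC1 k)).[z].
Proof.
rewrite horner_deltaP horner_prod; apply: eq_bigr => k' _.
by rewrite horner_exp hornerD hornerX hornerC addrC subrKA.
Qed.

Lemma size_Psi l k : size (Psi p m n f l k) = (Kc.-1 * R).+1.
Proof.
have XcE (u : F) : 'X + u%:P = 'X - (- u)%:P by rewrite polyCN opprK.
rewrite size_prod => [|k' _]; last by rewrite XcE -size_poly_eq0 size_exp_XsubC.
under eq_bigr => k' _ do rewrite XcE size_exp_XsubC.
by rewrite sum_nat_const cardC1 card_ord mulnS; move: Kc.-1 R => x y; lia.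
Qed.

Variables (A : 'I_ell -> 'I_Kc -> 'M[F]_(m * a, p * b)) (B : 'I_ell -> 'I_Kc -> 'M[F]_(p * b, n * c)).
Variables (ZA : 'I_ell -> 'I_X -> 'M[F]_(a, b)) (ZB : 'I_ell -> 'I_X -> 'M[F]_(b, c)).

Definition Apart l : 'M[{poly F}]_(a, b) :=
  \sum_(k < Kc) deltaP l (predC1 k) *: Ppol (A l k) (f l k).
Definition Zpart l : 'M[{poly F}]_(a, b) := deltaP l predT *: Zpol (ZA l).
Definition Rest l k : 'M[{poly F}]_(a, b) :=
  \sum_(k' < Kc | k' != k) deltaP l [predD1 predC1 k' & k] *: Ppol (A l k') (f l k')
  + deltaP l (predC1 k) *: Zpol (ZA l).
(* The polynomial part of Psi(t) t^i / t^R' is (drop_poly R' (Psi X^i))(t); substituting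
   t := f_{l,k} - X makes it a polynomial in alpha_s. *)
Definition Diag l k : 'M[{poly F}]_(a, c) :=
  \sum_(i < R + p - 1) (drop_poly R (Psi p m n f l k * 'X^i) \Po subCX (f l k))
     *: map_mx polyC (Cmat (A l k) (B l k) i.+1).

Lemma Atil_mxeval s l : Atil n f alpha A ZA s l = mxeval (alpha s) (Apart l + Zpart l).
Proof.
rewrite /Atil mxevalD /Apart /Zpart mxeval_sum mxevalZ mxeval_Zpol scalerDr scaler_sumr.
congr (_ + _); last by rewrite Delta_deltaP.
by apply: eq_bigr => k _; rewrite mxevalZ mxeval_Ppol scalerA Delta_div.
Qed.

Lemma Btil_mxeval s l : Btil m f alpha B ZB s l =
  \sum_(k < Kc) ((f l k - alpha s) ^+ R)^-1 *: mxeval (alpha s) (Qpol m (B l k) (f l k))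
  + mxeval (alpha s) (Zpol (ZB l)).
Proof.
by rewrite /Btil mxeval_Zpol; congr (_ + _); apply: eq_bigr => k _; rewrite mxeval_Qpol.
Qed.

Lemma Apart_Zpart_split l k : Apart l + Zpart l =
  subCX (f l k) ^+ R *: Rest l k + deltaP l (predC1 k) *: Ppol (A l k) (f l k).
Proof.
rewrite /Apart /Rest /Zpart (bigD1 k) // scalerDr (deltaP_T_D1 l k) -scalerA.
rewrite -addrA addrC; congr (_ + _ + _); rewrite scaler_sumr; apply: eq_bigr => k' ne.
by rewrite scalerA -(deltaP_D1 l) // !inE eq_sym.
Qed.

Lemma mxeval_Diag s l k :
  ((f l k - alpha s) ^+ R)^-1 *:
    mxeval (alpha s) (deltaP l (predC1 k) *: (Ppol (A l k) (f l k) *m Qpol m (B l k) (f l k)))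
  = \sum_(i < R) ((f l k - alpha s) ^+ (R - i))^-1 *:
        \sum_(i' < i.+1) cc p m n f l k (i - i') *: Cmat (A l k) (B l k) i'.+1
    + mxeval (alpha s) (Diag l k).
Proof.
have t0 : f l k - alpha s != 0 by rewrite subr_eq0.
rewrite mxevalZ mxevalM !mxeval_Ppol mxeval_Qpol Ppoly_mulmx_Qpoly -horner_Psi.
rewrite scalerA scaler_sumr.
have shiftE (i : nat) : ((f l k - alpha s) ^+ R)^-1 * (Psi p m n f l k).[f l k - alpha s]
    * (f l k - alpha s) ^+ i = (Psi p m n f l k * 'X^i).[f l k - alpha s] / (f l k - alpha s) ^+ R.
  by rewrite hornerM hornerXn [RHS]mulrC mulrA.
under eq_bigr => i _ do rewrite scalerA shiftE horner_div_exp // scalerDl.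
rewrite big_split /= /Diag mxeval_sum; congr (_ + _); last first.
  by apply: eq_bigr => i _; rewrite mxeval_scaleC horner_comp horner_subCX.
under eq_bigr => i _ do rewrite scaler_suml.
rewrite exchange_big; apply: eq_bigr => j _ /=.
have jR : (j.+1 <= R + p - 1)%N by have := ltn_ord j; lia.
rewrite scaler_sumr (big_ord_widen (R + p - 1) (fun i : nat =>
  ((f l k - alpha s) ^+ (R - j))^-1 *: (cc p m n f l k (j - i) *: Cmat (A l k) (B l k) i.+1)) jR).
rewrite [RHS]big_mkcond.
apply: eq_bigr => i _; rewrite coefMXn ltnS ltnNge; case: (i <= j)%N; last by rewrite mul0r scale0r.
by rewrite scalerA mulrC.
Qed.

(* TZZ l + Tlow l is the polynomial part of Atil_l Btil_l; TZZ, which involves the noise alone,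
   is the only piece of degree N0 or more (mxdeg_Tlow). *)
Definition TZZ l : 'M[{poly F}]_(a, c) := Zpart l *m Zpol (ZB l).
Definition Tlow l : 'M[{poly F}]_(a, c) :=
  Apart l *m Zpol (ZB l) + \sum_(k < Kc) (Rest l k *m Qpol m (B l k) (f l k) + Diag l k).

Lemma Atil_mulmx_Btil s l :
  Atil n f alpha A ZA s l *m Btil m f alpha B ZB s l
  = \sum_(k < Kc) \sum_(i < R) ((f l k - alpha s) ^+ (R - i))^-1 *:
        \sum_(i' < i.+1) cc p m n f l k (i - i') *: Cmat (A l k) (B l k) i'.+1
    + mxeval (alpha s) (TZZ l + Tlow l).
Proof.
have termE k : mxeval (alpha s) (Apart l + Zpart l) *m
    (((f l k - alpha s) ^+ R)^-1 *: mxeval (alpha s) (Qpol m (B l k) (f l k)))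
  = \sum_(i < R) ((f l k - alpha s) ^+ (R - i))^-1 *:
        \sum_(i' < i.+1) cc p m n f l k (i - i') *: Cmat (A l k) (B l k) i'.+1
    + mxeval (alpha s) (Rest l k *m Qpol m (B l k) (f l k) + Diag l k).
  rewrite -scalemxAr -mxevalM (Apart_Zpart_split l k) mulmxDl -!scalemxAl mxevalD.
  rewrite scalerDr mxeval_Diag mxevalZ scalerA horner_exp horner_subCX mulVf.
    by rewrite scale1r addrCA mxevalD.
  by rewrite expf_neq0 // subr_eq0.
rewrite Atil_mxeval Btil_mxeval mulmxDr mulmx_sumr.
under eq_bigr => k _ do rewrite termE.
rewrite big_split /= -addrA; congr (_ + _).
rewrite -mxevalM -mxeval_sum -mxevalD /TZZ /Tlow mulmxDl.
by rewrite addrC addrAC [in RHS]addrC.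
Qed.

Lemma mxdeg_deltaPZ l P d r s (M : 'M[{poly F}]_(r, s)) :
  mxdeg_leq d M -> mxdeg_leq (#|P| * R + d) (deltaP l P *: M).
Proof. by apply: mxdeg_leqZ; rewrite size_deltaP. Qed.

Lemma mxdeg_TZZ l : mxdeg_leq (R * Kc + 2 * X - 1).-1 (TZZ l).
Proof.
apply: mxdeg_leqW (mxdeg_leqM (mxdeg_deltaPZ l predT (mxdeg_Zpol (ZA l))) (mxdeg_Zpol (ZB l))).
by rewrite card_ord [(R * Kc)%N]mulnC; lia.
Qed.

Lemma mxdeg_Rest l k : mxdeg_leq (Kc.-1 * R + X.-1) (Rest l k).
Proof.
apply: mxdeg_leqD; last first.
  by apply: mxdeg_leqW (mxdeg_deltaPZ _ _ (mxdeg_Zpol _)); rewrite cardC1 card_ord.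
apply: mxdeg_leq_sum => k' ne; apply: mxdeg_leqW (mxdeg_deltaPZ _ _ (mxdeg_Ppol _ _)).
rewrite card_predD1 ?cardC1 ?card_ord; last by rewrite !inE eq_sym.
have Kc2 : (1 < Kc)%N.
  move: ne (ltn_ord k) (ltn_ord k'); rewrite -val_eqE /=.
  by move: (nat_of_ord k) (nat_of_ord k') => x y /eqP; lia.
have : (Kc.-1 * R = Kc.-2 * R + R)%N by rewrite addnC -mulSn prednK //; lia.
have := pm_le_R p m hn; lia.
Qed.

Lemma mxdeg_Diag l k : mxdeg_leq (Kc.-1 * R + p.-1) (Diag l k).
Proof.
apply: mxdeg_leq_sum => i _; apply: mxdeg_leq_scaleC.
rewrite size_comp_poly2 ?size_subCX // size_drop_poly.
apply: leq_trans (leq_sub2r _ (size_polyMleq _ _)) _.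
rewrite size_Psi size_polyXn; move: (ltn_ord i); move: (nat_of_ord i) (Kc.-1 * R)%N => x y; lia.
Qed.

Lemma mxdeg_Tlow l : mxdeg_leq (N0 Kc X p m n).-1 (Tlow l).
Proof.
have [DEP DEQ] := DE_ge p m n; have pmR := pm_le_R p m hn.
have N0E : (N0 Kc X p m n = Kc.-1 * R + X + DE p m n)%N by rewrite /N0 mulnC subn1.
apply: mxdeg_leqD.
  apply: mxdeg_leqW (mxdeg_leqM (d1 := Kc.-1 * R + (p * m).-1) _ (mxdeg_Zpol (ZB l))).
    by rewrite N0E; lia.
  apply: mxdeg_leq_sum => k _; apply: mxdeg_leqW (mxdeg_deltaPZ _ _ (mxdeg_Ppol _ _)).
  by rewrite cardC1 card_ord.
apply: mxdeg_leq_sum => k _; apply: mxdeg_leqD.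
  by apply: mxdeg_leqW (mxdeg_leqM (mxdeg_Rest l k) (mxdeg_Qpol _ _ _)); rewrite N0E; lia.
by apply: mxdeg_leqW (mxdeg_Diag l k); rewrite N0E; lia.
Qed.

Definition TZZsum : 'M[{poly F}]_(a, c) := \sum_(l < ell) TZZ l.
Definition Tsum : 'M[{poly F}]_(a, c) := \sum_(l < ell) (TZZ l + Tlow l).

Lemma mxcoef_Tsum x : (N0 Kc X p m n <= x)%N -> mxcoef x Tsum = mxcoef x TZZsum.
Proof.
have N0_gt0 : (0 < N0 Kc X p m n)%N by rewrite /N0 addnC addnA addn_gt0 hX orbT.
have dT : mxdeg_leq (N0 Kc X p m n).-1 (\sum_(l < ell) Tlow l).
  by apply: mxdeg_leq_sum => l _; apply: mxdeg_Tlow.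
by move=> hx; rewrite /Tsum big_split raddfD [X in _ + X](mxcoef_eq0 dT) ?addr0 ?prednK.
Qed.

Lemma mxdeg_Tsum : mxdeg_leq (R * Kc + 2 * X - 1).-1 Tsum.
Proof.
apply: mxdeg_leq_sum => l _; apply: mxdeg_leqD; first exact: mxdeg_TZZ.
apply: mxdeg_leqW (mxdeg_Tlow l); rewrite -!subn1 leq_sub2r //.
exact: N0_le_nterms.
Qed.

Lemma fracSum_add (W1 W2 : 'I_ell -> 'I_Kc -> nat -> 'M[F]_(a, c)) s :
  fracSum p m n f alpha (fun l k i => W1 l k i + W2 l k i) s
  = fracSum p m n f alpha W1 s + fracSum p m n f alpha W2 s.
Proof.
rewrite /fracSum -big_split; apply: eq_bigr => l _ /=; rewrite -big_split.
apply: eq_bigr => k _ /=; rewrite -big_split; apply: eq_bigr => i _ /=.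
by rewrite -scalerDr -big_split; congr (_ *: _); apply: eq_bigr => i' _; rewrite scalerDr.
Qed.

Lemma Yans_expansion (Z' : nat -> 'M[F]_(a, c)) (Z'' : 'I_ell -> 'I_Kc -> nat -> 'M[F]_(a, c)) s :
  Yans f alpha A B ZA ZB Z' Z'' s
  = fracSum p m n f alpha (fun l k i => Cmat (A l k) (B l k) i + Z'' l k i) s
    + \sum_(x < R * Kc + 2 * X - 1) alpha s ^+ x *:
        (if (x.+1 <= N0 Kc X p m n)%N then mxcoef x Tsum + Z' x.+1 else mxcoef x Tsum).
Proof.
have D0 : (0 < R * Kc + 2 * X - 1)%N by lia.
rewrite (@sum_scale_ifD _ _ _ _ _ (fun x => mxcoef x Tsum) (fun x => Z' x.+1)) ?N0_le_nterms //.
rewrite /Yans /Mtil fracSum_add.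
under eq_bigr => l _ do rewrite Atil_mulmx_Btil.
rewrite big_split /= -mxeval_sum -/Tsum (mxeval_coef _ mxdeg_Tsum) prednK //.
by rewrite [X in _ + X]addrC addrACA.
Qed.

End Encoding.

Theorem mainTheorem2 (F : finFieldType) (S X ell Kc p m n a b c : nat)
  (hS : (0 < S)%N) (hX : (0 < X)%N) (hell : (0 < ell)%N) (hKc : (0 < Kc)%N)
  (hp : (0 < p)%N) (hm : (0 < m)%N) (hn : (0 < n)%N)
  (ha : (0 < a)%N) (hb : (0 < b)%N) (hc : (0 < c)%N)
  (hL : (ell * Kc <= #|{: F}| - S)%N)
  (f : 'I_ell -> 'I_Kc -> F) (alpha : 'I_S -> F)
  (hf : forall l k l' k', f l k = f l' k' -> l = l' /\ k = k')
  (halpha : injective alpha)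
  (hfa : forall l k s, f l k != alpha s) :
  (forall (A : 'I_ell -> 'I_Kc -> 'M[F]_(m * a, p * b))
          (B : 'I_ell -> 'I_Kc -> 'M[F]_(p * b, n * c)) (l : 'I_ell) (k : 'I_Kc),
     (forall s : 'I_S,
        @Ppoly F p m a b (A l k) (f l k - alpha s) *m @Qpoly F p m n b c (B l k) (f l k - alpha s)
        = \sum_(i < Rp p m n + p - 1) (f l k - alpha s) ^+ i *: @Cmat F p m n a b c (A l k) (B l k) i.+1)
     /\
     (forall (mi : 'I_m) (ni : 'I_n),
        @Cmat F p m n a b c (A l k) (B l k) (p + p * mi + p * m * ni)%N
          = \sum_(pi < p) blk (A l k) mi pi *m blk (B l k) pi ni
        /\ \sum_(pi < p) blk (A l k) mi pi *m blk (B l k) pi ni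
          = blk (A l k *m B l k) mi ni))
  /\
  (exists I : (('I_ell -> 'I_Kc -> 'M[F]_(m * a, p * b)) ->
               ('I_ell -> 'I_Kc -> 'M[F]_(p * b, n * c)) ->
               ('I_ell -> 'I_X -> 'M[F]_(a, b)) ->
               ('I_ell -> 'I_X -> 'M[F]_(b, c)) -> nat -> 'M[F]_(a, c)),
     (exists G : (('I_ell -> 'I_X -> 'M[F]_(a, b)) ->
                  ('I_ell -> 'I_X -> 'M[F]_(b, c)) -> nat -> 'M[F]_(a, c)),
        forall A B ZA ZB (x : nat), (N0 Kc X p m n < x)%N -> I A B ZA ZB x = G ZA ZB x)
     /\
     forall (A : 'I_ell -> 'I_Kc -> 'M[F]_(m * a, p * b))
            (B : 'I_ell -> 'I_Kc -> 'M[F]_(p * b, n * c))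
            (ZA : 'I_ell -> 'I_X -> 'M[F]_(a, b)) (ZB : 'I_ell -> 'I_X -> 'M[F]_(b, c))
            (Z' : nat -> 'M[F]_(a, c)) (Z'' : 'I_ell -> 'I_Kc -> nat -> 'M[F]_(a, c)),
       (forall (l : 'I_ell) (k : 'I_Kc) (i : nat), inEset p m n i -> Z'' l k i = 0) ->
       forall s : 'I_S,
         @Yans F ell Kc X p m n a b c S f alpha A B ZA ZB Z' Z'' s
         = @fracSum F ell Kc p m n a c S f alpha
             (fun l k i => @Cmat F p m n a b c (A l k) (B l k) i + Z'' l k i) s
           + \sum_(x < Rp p m n * Kc + 2 * X - 1)
               alpha s ^+ x *:
                 (if (x.+1 <= N0 Kc X p m n)%N then I A B ZA ZB x.+1 + Z' x.+1
                  else I A B ZA ZB x.+1)).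
Proof.
split=> [A B l k | ].
  split=> [s | mi ni]; first exact: Ppoly_mulmx_Qpoly.
  by split; [exact: Cmat_block | rewrite blk_mul].
exists (fun A B ZA ZB x => mxcoef x.-1 (Tsum f A B ZA ZB)); split.
  exists (fun ZA ZB x => mxcoef x.-1 (TZZsum p m n f ZA ZB)) => A B ZA ZB x hx.
  by apply: mxcoef_Tsum => //; lia.
by move=> A B ZA ZB Z' Z'' _ s; exact: (Yans_expansion hfa).
Qed.
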